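(* Let $g:\mathbb{N}\to\mathbb{N}$ be monotone, strictly inflationary ($g(x)>x$ for all $x$) and super-homogeneous ($g(xy)\ge g(x)\cdot y$ for all $x,y\ge1$), and let $n\in\mathbb{N}$. If $\mathcal{Q}_0\subsetneq\mathcal{Q}_1\subsetneq\dots\subsetneq\mathcal{Q}_\ell$ is a $(g,n)$-controlled chain of congruences on $\mathbb{N}^d$, then $\ell\le 1+g^{\omega^{4d}}(4dn)$.
   Context: A congruence on $\mathbb{N}^d$ is an equivalence relation $\mathcal{Q}\subseteq\mathbb{N}^d\times\mathbb{N}^d$ with $(\mathbf{a},\mathbf{b})\in\mathcal{Q}\Rightarrow(\mathbf{a}+\mathbf{c},\mathbf{b}+\mathbf{c})\in\mathcal{Q}$, viewed as a subset of $\mathbb{N}^{2d}$. A chain $S_0\subsetneq S_1\subsetneq\dots\subsetneq S_\ell$ of subsets of $\mathbb{N}^k$ is $(g,n)$-controlled if for each $i\in[0,\ell-1]$ there is $\mathbf{s}_i\in S_{i+1}\setminus S_i$ with $\|\mathbf{s}_i\|\le g^i(n)$ ($\|\cdot\|$ maximum norm, $g^i$ the $i$-fold iterate). Hardy hierarchy relative to $g$: $g^0(x)=x$, $g^{\alpha+1}(x)=g^\alpha(g(x))$, $g^\lambda(x)=g^{\lambda(x)}(x)$ for limit $\lambda\le\omega^\omega$, using the fundamental sequences $\omega^\omega(x)=\omega^{x+1}$ and $(\beta+\omega^{k+1})(x)=\beta+\omega^k\cdot(x+1)$ where $\beta+\omega^{k+1}$ is in Cantor normal form. *)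

From mathcomp Require Import all_boot.
Set Implicit Arguments. Unset Strict Implicit. Unset Printing Implicit Defensive.

Definition vec (d : nat) := {ffun 'I_d -> nat}.
Definition vadd d (a b : vec d) : vec d := [ffun i => a i + b i].
Definition vnorm d (a : vec d) : nat := \max_(i < d) a i.

(* A subset of N^d x N^d = N^{2d}; max norm of (a,b) in N^{2d}. *)
Definition rel2 (d : nat) := vec d -> vec d -> Prop.
Definition pnorm d (a b : vec d) : nat := maxn (vnorm a) (vnorm b).

Definition is_congruence d (Q : rel2 d) : Prop :=
  [/\ (forall a, Q a a),
      (forall a b, Q a b -> Q b a),
      (forall a b c, Q a b -> Q b c -> Q a c) &
      (forall a b c, Q a b -> Q (vadd a c) (vadd b c))].

Definition strict_chain d (Q : nat -> rel2 d) (l : nat) : Prop :=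
  forall i, i < l ->
    (forall a b, Q i a b -> Q i.+1 a b) /\ ~ (forall a b, Q i.+1 a b -> Q i a b).

Definition controlled d (g : nat -> nat) (n : nat) (Q : nat -> rel2 d) (l : nat) : Prop :=
  forall i, i < l ->
    exists a b, [/\ Q i.+1 a b, ~ Q i a b & pnorm a b <= iter i g n].

(* Ordinals below omega^omega in Cantor normal form:
   [:: e1; ...; em] (e1 >= ... >= em) denotes omega^e1 + ... + omega^em.
   hardy g alpha x y  <->  g^alpha(x) = y, following:
     g^0(x) = x,  g^(b+1)(x) = g^b(g(x)),
     g^(b + omega^(k+1))(x) = g^(b + omega^k * (x+1))(x). *)
Inductive hardy (g : nat -> nat) : seq nat -> nat -> nat -> Prop :=
| hardy_zero x : hardy g [::] x x
| hardy_succ b x y : hardy g b (g x) y -> hardy g (rcons b 0) x y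
| hardy_lim b k x y : hardy g (b ++ nseq x.+1 k) x y -> hardy g (rcons b k.+1) x y.

From mathcomp Require Import all_boot zify.
From Stdlib Require Import Classical Wf_nat IndefiniteDescription.
Set Implicit Arguments. Unset Strict Implicit. Unset Printing Implicit Defensive.

(* Each control pair in Q_(i+1) \ Q_i yields a vector m_i of norm at most d g^i(n) that is
   least in its Q_i-class for the graded lexicographic order, yet Q_(i+1)-equivalent to a
   smaller vector.  Congruences are translation invariant, so m_i <= m_j for some i < j would
   make m_j reducible in Q_j, which contains Q_(i+1): the m_i form a controlled bad sequence
   of N^d.  Its length is bounded by induction on the dimension, for sequences whose entries
   carry tags and where only entries with equal tags are compared.  The first occurrences of
   the tags cut the sequence into blocks; inside a block every entry lies below an earlier
   entry with the same tag in some coordinate, where its value is therefore small.  Moving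
   that coordinate and its value into the tag and deleting the coordinate leaves a bad
   sequence of lower dimension, and counting gives g^l(dn) <= g^(omega^(2d+1))(4dn). *)

Section Iteration.
Variable f : nat -> nat.
Hypothesis f_infl : forall x, x <= f x.

Lemma leq_iter_self n x : x <= iter n f x.
Proof. by elim: n => //= n IH; apply: leq_trans IH (f_infl _). Qed.

Lemma leq_iter m n x : m <= n -> iter m f x <= iter n f x.
Proof. by move/subnK <-; rewrite iterD; apply: leq_iter_self. Qed.

Lemma leq_iter_above (h : nat -> nat) y n x :
  {homo h : u v / u <= v} -> (forall u, y <= u -> f u <= h u) -> y <= x ->
  iter n f x <= iter n h x.
Proof.
move=> h_homo f_le_h yx; elim: n => //= n IH.
exact: leq_trans (f_le_h _ (leq_trans yx (leq_iter_self n x))) (h_homo _ _ IH).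
Qed.

End Iteration.

Lemma homo_iter (f : nat -> nat) n :
  {homo f : x y / x <= y} -> {homo iter n f : x y / x <= y}.
Proof. by move=> f_homo x y xy; elim: n => //= n IH; apply: f_homo. Qed.

Lemma leq_addn_iter (f : nat -> nat) n x : (forall x, x < f x) -> x + n <= iter n f x.
Proof.
move=> f_infl; elim: n => [|n IH] /=; first by rewrite addn0.
by rewrite addnS; apply: leq_trans (f_infl _).
Qed.

(* [fgh g k] is the Hardy function g^(omega^k). *)
Fixpoint fgh (g : nat -> nat) (k : nat) : nat -> nat :=
  if k is k'.+1 then fun x => iter x.+1 (fgh g k') x else g.

Lemma hardy_cat g s x z b y :
  hardy g s x z -> hardy g b z y -> hardy g (b ++ s) x y.
Proof.
move=> hs; elim: hs b y => {s x z} [x|s x z _ IH|s k x z _ IH] b y hb.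
- by rewrite cats0.
- by rewrite -rcons_cat; apply/hardy_succ/IH.
- by rewrite -rcons_cat; apply: hardy_lim; rewrite -catA; apply: IH.
Qed.

Lemma hardy_fgh g k c x : hardy g (nseq c k) x (iter c (fgh g k) x).
Proof.
have nseqS j c' : nseq c'.+1 j = rcons (nseq c' j) j by elim: c' => //= c' ->.
elim: k c x => [|k IHk] c x; elim: c x => [|c IHc] x;
  rewrite ?nseqS ?iterSr; try exact: hardy_zero.
- exact/hardy_succ/IHc.
- exact/hardy_lim/(hardy_cat (IHk _ _))/IHc.
Qed.

Section FastGrowing.
Variable g : nat -> nat.
Hypothesis g_homo : {homo g : x y / x <= y}.
Hypothesis g_infl : forall x, x <= g x.

Lemma fgh_infl k x : x <= fgh g k x.
Proof.
elim: k x => [|k IH] x; first exact: g_infl.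
exact: (@leq_iter (fgh g k) IH 0 x.+1 x (leq0n _)).
Qed.

Lemma fgh_homo k : {homo fgh g k : x y / x <= y}.
Proof.
elim: k => [|k IH] x y xy; first exact: g_homo.
exact: leq_trans (homo_iter _ IH xy) (@leq_iter _ (@fgh_infl k) x.+1 y.+1 y xy).
Qed.

Lemma fgh_leq_level k m x : k <= m -> fgh g k x <= fgh g m x.
Proof.
move/subnK <-; elim: (m - k) => // j IH.
exact: leq_trans IH (@leq_iter _ (@fgh_infl _) 1 x.+1 x isT).
Qed.

End FastGrowing.

Definition fresh (tag : nat -> nat) i := tag i \notin [seq tag j | j <- iota 0 i].

Lemma count_fresh_leq tag s L :
  (forall i, i < L -> tag i < s) -> count (fresh tag) (iota 0 L) <= s.
Proof.
move=> tag_lt; rewrite -size_filter -(size_map tag) -(size_iota 0 s).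
apply: uniq_leq_size.
- rewrite map_inj_in_uniq ?filter_uniq ?iota_uniq // => i j.
  rewrite !mem_filter !mem_iota => /andP[fi _] /andP[fj _] tij.
  have seen k k' : k < k' -> tag k = tag k' -> ~~ fresh tag k'.
    by move=> kk' tkk'; apply/negPn/mapP; exists k; rewrite ?mem_iota.
  case: (ltngtP i j) => // [ij|ji]; first by case/negP: (seen _ _ ij tij).
  by case/negP: (seen _ _ ji (esym tij)).
- move=> t /mapP[i]; rewrite mem_filter !mem_iota => /andP[_ /andP[_ iL]] ->.
  exact: tag_lt.
Qed.

Lemma seen_before_nonfresh tag a b :
  (forall i, a <= i < b -> ~~ fresh tag i) ->
  forall i, a <= i < b -> exists2 j, j < a & tag j = tag i.
Proof.
move=> nonfresh; elim/ltn_ind=> i IH /andP[ai ib].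
have /negPn/mapP[j] := nonfresh i (introT andP (conj ai ib)).
rewrite mem_iota => /andP[_ ji] ->.
have [ja|aj] := ltnP j a; first by exists j.
by apply: IH; rewrite ?aj ?(ltn_trans ji ib).
Qed.

Lemma iter_by_blocks (g Phi : nat -> nat) (p : pred nat) L x :
  {homo g : u v / u <= v} -> {homo Phi : u v / u <= v} ->
  (forall a b, a <= b <= L -> (forall i, a <= i < b -> ~~ p i) ->
     iter b g x <= Phi (iter a g x)) ->
  iter L g x <= iter (count p (iota 0 L)) (Phi \o g) (Phi x).
Proof.
move=> g_homo Phi_homo block.
have rho_homo : {homo Phi \o g : u v / u <= v} by move=> u v uv; apply/Phi_homo/g_homo.
suff inv b : b <= L -> exists2 a, a <= b & (forall i, a <= i < b -> ~~ p i) /\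
    Phi (iter a g x) <= iter (count p (iota 0 b)) (Phi \o g) (Phi x).
  have [a aL [free le]] := inv L (leqnn L).
  by apply: leq_trans (block a L _ free) le; rewrite aL leqnn.
elim: b => [_|b IH bL]; first by exists 0.
have [a ab [free le]] := IH (ltnW bL).
have -> : iota 0 b.+1 = iota 0 b ++ [:: b] by rewrite -addn1 iotaD.
rewrite count_cat /= addn0.
case pb: (p b).
- exists b.+1 => //; split=> [i|]; first by case/andP=> /leq_ltn_trans h /h; rewrite ltnn.
  rewrite addn1 /=; apply: rho_homo (leq_trans (block a b _ free) le).
  by rewrite ab ltnW.
- exists a; first exact: leq_trans ab _.
  split; last by rewrite addn0.
  move=> i /andP[ai]; rewrite ltnS leq_eqVlt => /orP[/eqP -> | ib]; first by rewrite pb.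
  by apply: free; rewrite ai.
Qed.

Lemma mixed_radix_inj K t c t' c' :
  c < K -> c' < K -> t * K + c = t' * K + c' -> t = t' /\ c = c'.
Proof.
move=> cK c'K e.
have ec : c = c' by have := congr1 (modn^~ K) e; rewrite /= !modnMDl !modn_small.
split=> //; move: e; rewrite ec => /addIn/eqP.
by rewrite eqn_pmul2r ?(leq_ltn_trans (leq0n c) cK) // => /eqP.
Qed.

Definition delete_at (j : nat) (u : nat -> nat) : nat -> nat :=
  fun c => u (if c < j then c else c.+1).

Lemma has_delete_at (u w : nat -> nat) j K : j < K.+1 -> u j = w j ->
  has (fun c => w c < u c) (iota 0 K.+1) ->
  has (fun c => delete_at j w c < delete_at j u c) (iota 0 K).
Proof.
move=> jK ujw; apply: contraTT => /hasPn le_del; apply/hasPn => c.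
rewrite mem_iota /= -leqNgt => cK.
have le c' : c' < K -> delete_at j u c' <= delete_at j w c'.
  by move=> c'K; rewrite leqNgt; apply: le_del; rewrite mem_iota.
case: (ltngtP c j) => [cj | jc | -> ]; last by rewrite ujw.
- by have := le c; rewrite /delete_at cj; apply; lia.
- case: c cK jc => // c cK; rewrite ltnS => jc.
  have cj : (c < j) = false by rewrite ltnNge jc.
  by have := le c; rewrite /delete_at cj; apply; lia.
Qed.

(* Entries are K-vectors read on [0, K); only entries with equal tags are compared. *)
Definition bad K L (tag : nat -> nat) (v : nat -> nat -> nat) :=
  forall i j, i < j < L -> tag i = tag j -> has (fun c => v j c < v i c) (iota 0 K).

Section DicksonLength.
Variable g : nat -> nat.
Hypothesis g_homo : {homo g : x y / x <= y}.
Hypothesis g_infl : forall x, x < g x.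
Hypothesis g_suphom : forall x y, 0 < x -> 0 < y -> g x * y <= g (x * y).

Let g_infl_le x : x <= g x := ltnW (g_infl x).

Lemma double_leq_g z : 0 < z -> z.*2 <= g z.
Proof.
move=> z0; have := g_suphom (isT : 0 < 1) z0; have := g_infl 1.
rewrite mul1n -mul2n; nia.
Qed.

Lemma exp2_leq_iter n u : 0 < u -> 2 ^ n * u <= iter n g u.
Proof.
move=> u0; elim: n => [|n IH] /=; first by rewrite mul1n.
have iter0 : 0 < iter n g u := leq_trans u0 (leq_iter_self g_infl_le _ _).
by rewrite expnS -mulnA mul2n; apply: leq_trans (double_leq_g iter0); rewrite leq_double.
Qed.

Lemma iter_scale c n m : 0 < c -> 0 < m -> c * iter n g m <= iter n g (c * m).
Proof.
move=> c0 m0; elim: n => //= n IH.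
have iter0 : 0 < iter n g m := leq_trans m0 (leq_iter_self g_infl_le _ _).
by rewrite mulnC; apply: leq_trans (g_suphom iter0 c0) (g_homo _); rewrite mulnC.
Qed.

Lemma fgh_absorbs_scale k c u : 0 < k -> 0 < c -> c <= u * u -> 2 <= u ->
  fgh g k (c * g u) <= fgh g k.+1 u.
Proof.
move=> k0 c0 cu u2.
have sqr_leq_exp2 : u * u <= 2 ^ u.+1.
  elim: (u) => // w; have := ltn_expl w (isT : 1 < 2); rewrite !expnS; nia.
have scale : c * g u <= g (fgh g k u).
  (* u * c <= u ^ 3 <= 2 ^ u.+1 * u <= g^(u+1)(u) = fgh g 1 u *)
  rewrite mulnC; apply: leq_trans (g_suphom _ c0) (g_homo _); first lia.
  apply: leq_trans (fgh_leq_level g_infl_le _ (k0 : 1 <= k)).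
  by apply: leq_trans (exp2_leq_iter _ _); [nia | lia].
apply: leq_trans (fgh_homo g_homo g_infl_le _ scale) _.
apply: leq_trans (fgh_homo g_homo g_infl_le _ (fgh_leq_level g_infl_le _ (leq0n k))) _.
exact: (@leq_iter _ (fgh_infl g_infl_le k) 3 u.+1 u u2).
Qed.

Definition dickson_bound K (G : nat -> nat) := forall y x s L tag v,
  2 <= y -> K <= y -> 0 < x <= y -> s <= y ->
  (forall i, i < L -> tag i < s) ->
  (forall i c, i < L -> c < K -> v i c <= iter i g x) ->
  bad K L tag v -> iter L g x <= G y.

Lemma dickson_bound0 : dickson_bound 0 (fgh g 1).
Proof.
move=> y x s L tag v _ _ /andP[_ xy] sy tag_lt _ vbad.
have block a b : a <= b <= L -> (forall i, a <= i < b -> ~~ fresh tag i) ->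
    iter b g x <= id (iter a g x).
  case/andP=> ab bL nonfresh; case: (ltngtP a b) ab => // [ab _ | -> //].
  have [j ja tja] : exists2 j, j < a & tag j = tag a.
    by apply: (seen_before_nonfresh nonfresh); rewrite leqnn ab.
  by have := vbad j a; rewrite ja (leq_trans ab bL) => /(_ isT tja).
have fresh_steps : iter L g x <= iter (count (fresh tag) (iota 0 L)) g x
  := iter_by_blocks g_homo (fun _ _ uv => uv) block.
change (iter L g x <= iter y.+1 g y).
apply: leq_trans fresh_steps (leq_trans (homo_iter _ g_homo xy) _).
apply: (@leq_iter g g_infl_le _ _ y).
exact: leq_trans (count_fresh_leq tag_lt) (leq_trans sy (leqnSn y)).
Qed.

Lemma bad_block_bound K G y x s L tag v :
  dickson_bound K G -> 2 <= y -> K.+1 <= y -> 0 < x -> s <= y ->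
  (forall i, i < L -> tag i < s) ->
  (forall i c, i < L -> c < K.+1 -> v i c <= iter i g x) ->
  bad K.+1 L tag v ->
  forall a b, a <= b <= L -> (forall i, a <= i < b -> ~~ fresh tag i) ->
  iter b g x <= G (y * K.+1 * iter a g x).
Proof.
move=> IH y2 Ky x0 sy tag_lt v_le vbad a b /andP[ab bL] nonfresh.
set B := iter a g x.
have B0 : 0 < B := leq_trans x0 (leq_iter_self g_infl_le _ _).
have below i : a <= i < b -> has (fun c => v i c < B) (iota 0 K.+1).
  move=> iab; have [j ja tji] := seen_before_nonfresh nonfresh iab.
  have /hasP[c cK lt] : has (fun c => v i c < v j c) (iota 0 K.+1).
    by apply: vbad tji; lia.
  apply/hasP; exists c => //; apply: leq_trans lt _.
  apply: leq_trans (v_le _ _ _ _) (leq_iter g_infl_le _ (ltnW ja)); first lia.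
  by move: cK; rewrite mem_iota.
pose col i := find (fun c => v i c < B) (iota 0 K.+1).
have col_lt i : a <= i < b -> col i < K.+1 /\ v i (col i) < B.
  move=> iab; have has_below := below i iab.
  have col_lt : col i < K.+1 by rewrite -[X in _ < X](size_iota 0 K.+1) -has_find.
  by split=> //; have := nth_find 0 has_below; rewrite nth_iota.
(* (old tag, a coordinate where the entry is below B, its value there) in mixed radix *)
pose tag' i := (tag (a + i) * K.+1 + col (a + i)) * B + v (a + i) (col (a + i)).
pose v' i := delete_at (col (a + i)) (v (a + i)).
have -> : iter b g x = iter (b - a) g B by rewrite /B -iterD subnK.
apply: (IH _ _ (y * K.+1 * B) _ tag' v'); [nia | nia | nia | done | | | ].
- move=> i iba; have [cK vB] := col_lt (a + i) ltac:(lia).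
  have := tag_lt (a + i) ltac:(lia); rewrite /tag'; nia.
- move=> i c iba cK; rewrite /v' /delete_at /B -iterD (addnC i a).
  have [colK _] := col_lt (a + i) ltac:(lia).
  by apply: v_le; [lia | case: ifP => _; lia].
- move=> i1 i2 /andP[i12 i2ba] e.
  have [c1K w1] := col_lt (a + i1) ltac:(lia).
  have [c2K w2] := col_lt (a + i2) ltac:(lia).
  have [e' ew] := mixed_radix_inj w1 w2 e.
  have [et ec] := mixed_radix_inj c1K c2K e'.
  rewrite /v' -ec; apply: has_delete_at => //; first by rewrite ew ec.
  by apply: vbad et; lia.
Qed.

Lemma dickson_boundS K :
  dickson_bound K (fgh g (2 * K + 1)) -> dickson_bound K.+1 (fgh g (2 * K.+1 + 1)).
Proof.
move=> IH y x s L tag v y2 Ky /andP[x0 xy] sy tag_lt v_le vbad.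
set m := 2 * K + 1.
pose Phi u := fgh g m (y * K.+1 * u).
have Phi_homo : {homo Phi : u w / u <= w}.
  by move=> u w uw; apply: fgh_homo => //; rewrite leq_mul2l uw orbT.
pose rho := Phi \o g.
have rho_homo : {homo rho : u w / u <= w} by move=> u w uw; apply/Phi_homo/g_homo.
have rho_infl u : u <= rho u.
  apply: leq_trans (g_infl_le u) (leq_trans _ (fgh_infl g_infl_le m _)).
  by rewrite leq_pmull // muln_gt0 (leq_trans _ y2).
have rho_leq u : y <= u -> rho u <= fgh g m.+1 u.
  by move=> yu; apply: fgh_absorbs_scale; rewrite ?muln_gt0 //; nia.
have blocks := iter_by_blocks g_homo Phi_homo (bad_block_bound IH y2 Ky x0 sy tag_lt v_le vbad).
rewrite (_ : 2 * K.+1 + 1 = m.+2); last by rewrite /m; lia.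
(* g^L(x) <= rho^s(Phi x) <= rho^(y+1)(y) <= (fgh g m.+1)^(y+1)(y) *)
apply: leq_trans blocks (leq_trans (homo_iter _ rho_homo (Phi_homo _ _ (g_infl_le x))) _).
rewrite -iterSr; apply: leq_trans (homo_iter _ rho_homo xy) _.
apply: leq_trans (@leq_iter _ rho_infl _ y.+1 y _) _.
  by rewrite ltnS (leq_trans (count_fresh_leq tag_lt)).
change (iter y.+1 rho y <= iter y.+1 (fgh g m.+1) y).
exact: (leq_iter_above rho_infl y.+1 (fgh_homo g_homo g_infl_le _) rho_leq (leqnn y)).
Qed.

Lemma dickson_bound_fgh K : dickson_bound K (fgh g (2 * K + 1)).
Proof. by elim: K => [|K IH]; [exact: dickson_bound0 | exact: dickson_boundS]. Qed.

End DicksonLength.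

Fixpoint lexlt k (u v : nat -> nat) : bool :=
  if k is k'.+1 then
    (u 0 < v 0) || (u 0 == v 0) && lexlt k' (fun i => u i.+1) (fun i => v i.+1)
  else false.

Lemma eq_lexlt k u u' v v' : u =1 u' -> v =1 v' -> lexlt k u v = lexlt k u' v'.
Proof.
elim: k u u' v v' => //= k IH u u' v v' eu ev.
by rewrite eu ev (IH _ (fun i => u' i.+1) _ (fun i => v' i.+1)).
Qed.

Lemma lexlt_addr k u v w :
  lexlt k u v -> lexlt k (fun i => u i + w i) (fun i => v i + w i).
Proof.
elim: k u v w => //= k IH u v w.
rewrite ltn_add2r eqn_add2r => /orP[-> //|/andP[-> lt]].
by rewrite (IH _ _ (fun i => w i.+1) lt) orbT.
Qed.

Lemma lexlt_total k u v :
  [\/ forall i, i < k -> u i = v i, lexlt k u v | lexlt k v u].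
Proof.
elim: k u v => [|k IH] u v; first by apply: Or31.
case: (ltngtP (u 0) (v 0)) => [lt|gt|e0] /=; rewrite ?lt ?gt ?orbT; try by constructor.
rewrite e0 eqxx /=.
case: (IH (fun i => u i.+1) (fun i => v i.+1)) => [e|lt|gt]; rewrite ?lt ?gt ?orbT;
  try by constructor.
by apply: Or31 => -[|i] ik //; apply: e.
Qed.

Lemma ex_minn_classic (P : nat -> Prop) n :
  P n -> exists2 m, P m & forall k, P k -> m <= k.
Proof.
move=> Pn; have [m [[Pm min] _]] := @dec_inh_nat_subset_has_unique_least_element P
  (fun k => classic (P k)) (ex_intro _ n Pn).
by exists m => // k /min/leP.
Qed.

Lemma lexlt_min k (P : (nat -> nat) -> Prop) u :
  P u -> exists2 m, P m & forall w, P w -> ~~ lexlt k w m.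
Proof.
elim: k P u => [|k IH] P u Pu; first by exists u.
have [m0 [u0 Pu0 u00] min0] :=
  ex_minn_classic (P := fun n => exists2 w, P w & w 0 = n) (ex_intro2 _ _ u Pu erefl).
pose P' w := exists2 u, P u & u 0 = m0 /\ w = (fun i => u i.+1).
have [w [u1 Pu1 [u10 ->]] minw] := IH P' _ (ex_intro2 _ _ u0 Pu0 (conj u00 erefl)).
exists u1 => // z Pz /=.
rewrite u10 negb_or -leqNgt (min0 _ (ex_intro2 _ _ z Pz erefl)) /=.
apply/negP => /andP[/eqP z0 lt].
by have := minw _ (ex_intro2 _ _ z Pz (conj z0 erefl)); rewrite lt.
Qed.

Section GradedLex.
Variable d : nat.

Definition vcoord (a : vec d) (c : nat) : nat := if insub c is Some o then a o else 0.
Definition vsum (a : vec d) : nat := \sum_(o < d) a o.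
(* Entry 0 is the total degree, so [lexlt d.+1] on keys is the graded lexicographic order. *)
Definition grlex_key (a : vec d) (c : nat) : nat :=
  if c is c'.+1 then vcoord a c' else vsum a.
Definition grlex_lt (a b : vec d) : bool := lexlt d.+1 (grlex_key a) (grlex_key b).

Lemma vcoord_val (a : vec d) (o : 'I_d) : vcoord a o = a o.
Proof. by rewrite /vcoord valK. Qed.

Lemma grlex_key_vadd (a c : vec d) i :
  grlex_key (vadd a c) i = grlex_key a i + grlex_key c i.
Proof.
case: i => [|i] /=; first by rewrite -big_split; apply: eq_bigr => o _; rewrite ffunE.
by rewrite /vcoord; case: insub => // o; rewrite ffunE.
Qed.

Lemma grlex_lt_addr (a b c : vec d) : grlex_lt a b -> grlex_lt (vadd a c) (vadd b c).
Proof.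
rewrite /grlex_lt (eq_lexlt _ (grlex_key_vadd a c) (grlex_key_vadd b c)).
exact: lexlt_addr.
Qed.

Lemma grlex_lt_total (a b : vec d) : [\/ a = b, grlex_lt a b | grlex_lt b a].
Proof.
case: (lexlt_total d.+1 (grlex_key a) (grlex_key b)) => [e|lt|gt]; try by constructor.
by apply: Or31; apply/ffunP => o; rewrite -!vcoord_val; exact: (e o.+1 (ltn_ord o)).
Qed.

Lemma grlex_min (P : vec d -> Prop) a :
  P a -> exists2 m, P m & forall z, P z -> ~~ grlex_lt z m.
Proof.
move=> Pa; have [_ [m Pm ->] min] :=
  @lexlt_min d.+1 (fun u => exists2 z, P z & u = grlex_key z) _ (ex_intro2 _ _ a Pa erefl).
by exists m => // z Pz; apply: min; exists z.
Qed.

Lemma coord_leq_of_grlex (a m : vec d) o : ~~ grlex_lt a m -> m o <= d * vnorm a.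
Proof.
rewrite /grlex_lt /= negb_or -leqNgt => /andP[sum_le _].
have m_le : m o <= vsum m by rewrite /vsum (bigD1 o) //= leq_addr.
have sum_le_norm : vsum a <= d * vnorm a.
  rewrite -[X in X * _]card_ord -sum_nat_const.
  by apply: leq_sum => o' _; apply: leq_bigmax.
exact: leq_trans m_le (leq_trans sum_le sum_le_norm).
Qed.

End GradedLex.

Section Reducibility.
Variable d : nat.
Implicit Types (Q : rel2 d) (a b m : vec d).

Definition reducible Q m := exists2 z, Q m z & grlex_lt z m.

Lemma reducible_leq Q m m' :
  is_congruence Q -> reducible Q m -> (forall o, m o <= m' o) -> reducible Q m'.
Proof.
case=> _ _ _ Qadd [z Qmz zm] mm'.
pose c : vec d := [ffun o => m' o - m o].
have -> : m' = vadd m c by apply/ffunP => o; rewrite !ffunE subnKC.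
by exists (vadd z c); [apply: Qadd | apply: grlex_lt_addr].
Qed.

Lemma irreducible_rep Q a :
  is_congruence Q -> exists2 m, Q a m & ~ reducible Q m /\ ~~ grlex_lt a m.
Proof.
case=> Qrefl Qsym Qtrans _.
have [m Qam min] := grlex_min (Qrefl a).
exists m => //; split; last exact: min.
by case=> z Qmz; apply/negP/min/(Qtrans _ m).
Qed.

Lemma strict_extension_witness Q Q' a b :
  is_congruence Q -> is_congruence Q' -> (forall x y, Q x y -> Q' x y) ->
  Q' a b -> ~ Q a b ->
  exists m, [/\ reducible Q' m, ~ reducible Q m & forall o, m o <= d * pnorm a b].
Proof.
move=> congQ congQ' QQ'.
wlog: a b / exists2 ma, Q a ma &
  exists2 mb, Q b mb & [/\ ~ reducible Q mb, ~~ grlex_lt b mb & grlex_lt ma mb].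
  move=> wlog_lt Q'ab nQab.
  have [ma Qama [irra ama]] := irreducible_rep a congQ.
  have [mb Qbmb [irrb bmb]] := irreducible_rep b congQ.
  case: congQ congQ' => Qrefl Qsym Qtrans _ [_ Q'sym _ _].
  case: (grlex_lt_total ma mb) => [eab|ab|ba].
  - by case: nQab; apply: Qtrans Qama _; apply: Qsym; rewrite eab.
  - by apply: wlog_lt => //; exists ma => //; exists mb.
  - rewrite /pnorm maxnC; apply: wlog_lt; [ | exact: Q'sym | by move/Qsym].
    by exists mb => //; exists ma.
case=> ma Qama [mb Qbmb [irrb bmb ab]] Q'ab _.
have [_ Qsym _ _] := congQ; have [_ Q'sym Q'trans _] := congQ'.
exists mb; split=> // [|o].
- exists ma => //; apply: (Q'trans _ b); first exact/QQ'/Qsym.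
  by apply: (Q'trans _ a); [exact: Q'sym | exact: QQ'].
- by apply: leq_trans (coord_leq_of_grlex o bmb) _; rewrite leq_mul2l leq_maxr orbT.
Qed.
End Reducibility.

Lemma strict_chain_incl d (Q : nat -> rel2 d) l i j :
  strict_chain Q l -> i <= j <= l -> forall a b, Q i a b -> Q j a b.
Proof.
move=> chain /andP[ij jl] a b; elim: j ij jl => [|j IH] ij jl.
  by move: ij; rewrite leqn0 => /eqP ->.
have [ij'|-> //] : i <= j \/ i = j.+1 by lia.
by move=> Qi; apply: (proj1 (chain j jl)); apply: IH ij' (ltnW jl) Qi.
Qed.

Lemma vec_neq_coord d (a b : vec d) : a <> b -> exists o, a o != b o.
Proof.
move=> ab; case: (pickP (fun o => a o != b o)) => [o neq | same]; first by exists o.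
by case: ab; apply/ffunP => o; apply/eqP/negbFE/same.
Qed.

Lemma pnorm_gt0 d (a b : vec d) o : a o != b o -> 0 < pnorm a b.
Proof.
move=> neq; have : (0 < a o) || (0 < b o) by move: neq; case: (a o) (b o) => [|?] [|?].
rewrite /pnorm leq_max => /orP[] pos; apply/orP; [left | right];
  exact: leq_trans pos (leq_bigmax _).
Qed.

Lemma coord_leq_of_not_has d (a b : vec d) :
  ~~ has (fun c => vcoord b c < vcoord a c) (iota 0 d) -> forall o, a o <= b o.
Proof.
move=> /hasPn le o; have := le o; rewrite mem_iota ltn_ord !vcoord_val -leqNgt; exact.
Qed.

Lemma controlled_chain_pos g n d (Q : nat -> rel2 d) l :
  is_congruence (Q 0) -> controlled g n Q l -> 0 < l -> 0 < d /\ 0 < n.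
Proof.
move=> [Qrefl _ _ _] ctrl l0; have [a [b [_ nQab abn]]] := ctrl 0 l0.
have [o abo] : exists o, a o != b o.
  by apply: vec_neq_coord => eab; apply: nQab; rewrite eab.
split; first exact: leq_ltn_trans (leq0n o) (ltn_ord o).
exact: leq_trans (pnorm_gt0 abo) abn.
Qed.

Lemma controlled_chain_bad g n d (Q : nat -> rel2 d) l :
  (forall i, i <= l -> is_congruence (Q i)) -> strict_chain Q l -> controlled g n Q l ->
  exists m : nat -> vec d, bad d l (fun=> 0) (fun i => vcoord (m i)) /\
    forall i o, i < l -> m i o <= d * iter i g n.
Proof.
move=> cong chain ctrl.
have witness i : exists m : vec d, i < l ->
    [/\ reducible (Q i.+1) m, ~ reducible (Q i) m & forall o, m o <= d * iter i g n].
  case: (ltnP i l) => il; last by exists [ffun=> 0].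
  have [a [b [Q'ab nQab abn]]] := ctrl i il.
  have QQ' : forall x y, Q i x y -> Q i.+1 x y.
    by apply: strict_chain_incl chain _; rewrite leqnSn il.
  have [m [red irr bound]] :=
    strict_extension_witness (cong i (ltnW il)) (cong i.+1 il) QQ' Q'ab nQab.
  by exists m => _; split=> // o; apply: leq_trans (bound o) _; rewrite leq_mul2l abn orbT.
have [m mP] := functional_choice _ witness.
exists m; split=> [i j /andP[ij jl] _ | i o il]; last by have [_ _] := mP i il; apply.
apply: contraT => /coord_leq_of_not_has le_ij.
have [[z Qz zm] _ _] := mP i (ltn_trans ij jl).
have [_ irr _] := mP j jl.
case: irr; apply: reducible_leq (cong j (ltnW jl)) _ le_ij.
by exists z => //; apply: strict_chain_incl chain _ _ _ Qz; rewrite ij ltnW.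
Qed.

Theorem lemma15 (g : nat -> nat)
  (g_mono : forall x y, x <= y -> g x <= g y)
  (g_infl : forall x, x < g x)
  (g_suphom : forall x y, 1 <= x -> 1 <= y -> g x * y <= g (x * y))
  (n d : nat) (Q : nat -> rel2 d) (l : nat)
  (Qcong : forall i, i <= l -> is_congruence (Q i))
  (Qchain : strict_chain Q l)
  (Qctrl : controlled g n Q l) :
  exists h, hardy g [:: 4 * d] (4 * d * n) h /\ l <= 1 + h.
Proof.
exists (fgh g (4 * d) (4 * d * n)); split; first exact: (hardy_fgh g (4 * d) 1).
have [-> //|l0] := posnP l.
have [d0 n0] := controlled_chain_pos (Qcong 0 (leq0n l)) Qctrl l0.
have [m [mbad m_le]] := controlled_chain_bad Qcong Qchain Qctrl.
have v_le i c : i < l -> c < d -> vcoord (m i) c <= iter i g (d * n).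
  move=> il _; rewrite /vcoord; case: insub => [o|//].
  exact: leq_trans (m_le i o il) (iter_scale g_mono g_infl g_suphom _ d0 n0).
have bound := @dickson_bound_fgh g g_mono g_infl g_suphom d (4 * d * n) (d * n) 1 l
  (fun=> 0) (fun i => vcoord (m i))
  ltac:(nia) ltac:(nia) ltac:(nia) ltac:(nia) (fun _ _ => isT) v_le mbad.
have l_le : l <= iter l g (d * n).
  exact: leq_trans (leq_addl (d * n) l) (leq_addn_iter _ _ g_infl).
apply: leq_trans l_le (leq_trans bound (leq_trans _ (leq_addl 1 _))).
by apply: fgh_leq_level => [x|]; [apply: ltnW | lia].
Qed.
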